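(* Let $(\mathcal{X},\mathcal{Y},\mathcal{I})$ be a $(v,b,r,\lambda)$-RPBD. Suppose there exists an integer $k$ such that $$[b:r:\lambda]=\left[\frac{v}{k}\frac{v-1}{k-1}:\frac{v-1}{k-1}:1\right].$$ Then $|\mathcal{I}^y|=k$ for every $y\in\mathcal{Y}$, and hence $(\mathcal{X},\mathcal{Y},\mathcal{I})$ is a $(v,b,r,k,\lambda)$-block design.
   Context: For an incidence structure $(\mathcal{X},\mathcal{Y},\mathcal{I})$ with $\mathcal{I}\subset\mathcal{X}\times\mathcal{Y}$, $\mathcal{I}_x=\{y:(x,y)\in\mathcal{I}\}$ and $\mathcal{I}^y=\{x:(x,y)\in\mathcal{I}\}$. For integers $v>0$, $b>r>\lambda\ge0$, a $(v,b,r,\lambda)$-RPBD is an incidence structure with $\mathcal{X},\mathcal{Y}$ nonempty finite, $|\mathcal{X}|=v$, $|\mathcal{Y}|=b$, $|\mathcal{I}_x|=r$ for all $x$, $|\mathcal{I}_x\cap\mathcal{I}_{x'}|=\lambda$ for all $x\neq x'$. A $(v,b,r,k,\lambda)$-block design is such an incidence structure that in addition satisfies $|\mathcal{I}^y|=k$ for all $y$ (with $v>k>0$). The ratio equality $[a_1:a_2:a_3]=[c_1:c_2:c_3]$ means $(a_1,a_2,a_3)=t(c_1,c_2,c_3)$ for some $t>0$. *)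

From HB Require Import structures.
From mathcomp Require Import all_boot all_order all_algebra.
Set Implicit Arguments. Unset Strict Implicit. Unset Printing Implicit Defensive.
Import Order.TTheory GRing.Theory Num.Theory.

(* Incidence structure (X, Y, I): X, Y finite types, I : X -> Y -> bool
   (I x y  <=>  (x,y) \in I).
   I_x = [set y | I x y],  I^y = [set x | I x y]. *)
Definition Irow (X Y : finType) (I : X -> Y -> bool) (x : X) : {set Y} :=
  [set y | I x y].
Definition Icol (X Y : finType) (I : X -> Y -> bool) (y : Y) : {set X} :=
  [set x | I x y].

Definition is_RPBD (X Y : finType) (I : X -> Y -> bool) (v b r lam : nat) : Prop :=
  [/\ (0 < v)%N /\ (lam < r < b)%N, #|X| = v, #|Y| = b,
      (forall x : X, #|Irow I x| = r) &
      (forall x x' : X, x != x' -> #|Irow I x :&: Irow I x'| = lam)].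

Definition is_block_design (X Y : finType) (I : X -> Y -> bool)
    (v b r k lam : nat) : Prop :=
  [/\ is_RPBD I v b r lam, (0 < k < v)%N & (forall y : Y, #|Icol I y| = k)].

Definition ratio_eq (a1 a2 a3 c1 c2 c3 : rat) : Prop :=
  exists t : rat, (0 < t)%R /\ a1 = (t * c1)%R /\ a2 = (t * c2)%R /\ a3 = (t * c3)%R.

(** The block sizes [k_y = #|I^y|] of an RPBD have first moment
    [sum_y k_y = v r] and second moment [sum_y k_y^2 = v r + v (v - 1) lam],
    by double counting incident pairs and incident triples.  The ratio
    hypothesis says exactly [b k = v r] and [r (k - 1) = lam (v - 1)], which
    turn these moments into [b k] and [b k^2]; hence [sum_y (k_y - k)^2 = 0]
    and every block has size [k].  Non-degeneracy [0 < k < v] is automatic: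
    [r > 0] forces some block to be nonempty, and [r < b] forbids a block
    containing every point. *)

From HB Require Import structures.
From mathcomp Require Import all_boot all_order all_algebra ring.
Import Order.TTheory GRing.Theory Num.Theory.

Section DoubleCounting.

Variables (X Y : finType) (I : X -> Y -> bool).

Lemma card_Icol y : #|Icol I y| = \sum_x I x y.
Proof. by rewrite -sum1_card big_mkcond; apply: eq_bigr => x _; rewrite inE. Qed.

Lemma card_Irow x : #|Irow I x| = \sum_y I x y.
Proof. by rewrite -sum1_card big_mkcond; apply: eq_bigr => y _; rewrite inE. Qed.

Lemma card_IrowI x x' :
  #|Irow I x :&: Irow I x'| = \sum_y I x y * I x' y.
Proof.
rewrite -sum1_card big_mkcond; apply: eq_bigr => y _.
by rewrite !inE; case: (I x y); case: (I x' y).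
Qed.

Lemma sum_card_Icol : \sum_y #|Icol I y| = \sum_x #|Irow I x|.
Proof.
under eq_bigr do rewrite card_Icol.
by rewrite exchange_big; apply: eq_bigr => x _; rewrite card_Irow.
Qed.

Lemma sum_card_Icol_sqr :
  \sum_y #|Icol I y| ^ 2 = \sum_x \sum_x' #|Irow I x :&: Irow I x'|.
Proof.
under eq_bigr do rewrite card_Icol -mulnn big_distrlr.
rewrite exchange_big; apply: eq_bigr => x _.
by rewrite exchange_big; apply: eq_bigr => x' _; rewrite card_IrowI.
Qed.

End DoubleCounting.

Section RPBD.

Context {X Y : finType} {I : X -> Y -> bool} {v b r lam : nat}.
Hypothesis design : is_RPBD I v b r lam.

Lemma RPBD_sum_card_Icol : \sum_y #|Icol I y| = v * r.
Proof.
case: design => _ cardX _ row_r _.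
by rewrite sum_card_Icol (eq_bigr _ (fun x _ => row_r x)) sum_nat_const cardX.
Qed.

Lemma RPBD_sum_card_Icol_sqr :
  \sum_y #|Icol I y| ^ 2 = v * r + v * (v - 1) * lam.
Proof.
case: design => _ cardX _ row_r pair_lam.
rewrite sum_card_Icol_sqr -cardX -mulnA -mulnDr -sum_nat_const.
apply: eq_bigr => x _; rewrite (bigD1 x) //= setIid row_r.
rewrite (eq_bigr (fun _ => lam)) => [|x' x'x]; last by rewrite pair_lam // eq_sym.
by rewrite sum_nat_const cardC1 subn1.
Qed.

Lemma RPBD_uniform_block_design k :
  (forall y, #|Icol I y| = k) -> is_block_design I v b r k lam.
Proof.
move=> col_k; split=> //.
case: design => [[v_gt0 /andP[lam_lt_r r_lt_b]]] cardX cardY row_r _.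
have [x _] : exists x, x \in X by apply/card_gt0P; rewrite cardX.
have [y xy] : exists y, y \in Irow I x.
  by apply/card_gt0P; rewrite row_r (leq_ltn_trans _ lam_lt_r).
apply/andP; split.
  by rewrite -(col_k y) card_gt0; apply/set0Pn; exists x; move: xy; rewrite !inE.
rewrite -cardX ltn_neqAle -(col_k y) max_card andbT; apply: contraTneq r_lt_b => col_full.
have full y' : Icol I y' = [set: X].
  by apply/eqP; rewrite eqEcard subsetT cardsT col_k -(col_k y) col_full leqnn.
suff row_full : #|Irow I x| = b by rewrite -row_full row_r ltnn.
rewrite -cardY -cardsT; apply: eq_card => y'.
by move/setP/(_ x): (full y'); rewrite !inE.
Qed.

End RPBD.

Local Open Scope ring_scope.

Lemma eq_const_of_sum_sqr (T : finType) (R : realDomainType) (a : T -> R) c :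
  \sum_t a t = #|T|%:R * c -> \sum_t a t ^+ 2 = #|T|%:R * c ^+ 2 ->
  forall t, a t = c.
Proof.
move=> sum_a sum_a2 t; apply/eqP; rewrite -subr_eq0 -sqrf_eq0; apply/eqP.
have var0 : \sum_t (a t - c) ^+ 2 = 0.
  rewrite (eq_bigr (fun t => a t ^+ 2 + (- (2 * c)) * a t + c ^+ 2)) => [|t' _]; last by ring.
  by rewrite !big_split /= -mulr_sumr sum_a sum_a2 sumr_const -mulr_natl; ring.
by apply: (psumr_eq0P _ var0) => // t' _; apply: sqr_ge0.
Qed.

Lemma ratio_eq_design_params (v b r lam k : rat) : k != 0 -> k != 1 ->
  ratio_eq b r lam (v / k * ((v - 1) / (k - 1))) ((v - 1) / (k - 1)) 1 ->
  b * k = v * r /\ r * (k - 1) = lam * (v - 1).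
Proof.
move=> k0 k1 [t [_ [-> [-> ->]]]]; have k1' : k - 1 != 0 by rewrite subr_eq0.
by split; field; rewrite ?k0 ?k1'.
Qed.

Theorem proposition3 (X Y : finType) (I : X -> Y -> bool) (v b r lam : nat)
    (k : int) :
  is_RPBD I v b r lam ->
  (k != 0)%R -> (k != 1)%R ->
  ratio_eq b%:R r%:R lam%:R
    ((v%:R / k%:~R) * ((v%:R - 1) / (k%:~R - 1)))%R
    ((v%:R - 1) / (k%:~R - 1))%R
    1%R ->
  (forall y : Y, (#|Icol I y|%:Z = k)%R) /\
  is_block_design I v b r `|k|%N lam.
Proof.
move=> design k0 k1 /ratio_eq_design_params[].
- by rewrite intr_eq0.
- by rewrite -[1 : rat]/(1%:~R) eqr_int.
move=> b_eq r_eq.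
have cardY : #|Y| = b by case: design.
have col_size_rat y : #|Icol I y|%:R = k%:~R :> rat.
  apply: (@eq_const_of_sum_sqr _ _ (fun y => #|Icol I y|%:R)); rewrite cardY.
    by rewrite -natr_sum (RPBD_sum_card_Icol design) natrM -b_eq mulrC.
  rewrite -(eq_bigr _ (fun y _ => natrX _ _ _)) -natr_sum (RPBD_sum_card_Icol_sqr design).
  have [[v_gt0 _] _ _ _ _] := design.
  rewrite natrD !natrM natrB // -mulrA [_ * lam%:R]mulrC -r_eq.
  by rewrite expr2 mulrA b_eq; ring.
have col_size y : #|Icol I y|%:Z = k by apply: (@intr_inj rat); rewrite -pmulrn col_size_rat.
split=> //; apply: (RPBD_uniform_block_design design) => y.
by rewrite -(col_size y) absz_nat.
Qed.
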